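(* In the standing setting below, suppose $0\le\rho<\rho_m$ in $\Omega_T$ for a constant $\rho_m>1$, and let $b\ge0$, $e\ge0$ be given continuous functions on $\Omega_T$ with $e$ continuously differentiable in $r$ (twice, as needed for the equation to be classical). Let $n\ge0$ be a classical solution of $$\partial_t n+\frac1r\partial_r(rvn)=\frac1r\partial_r(rD_n\partial_r n)-\frac1r\partial_r\Big(r\,\chi_n\rho\, n\, H(1-n/n_m)\,\Phi(\partial_r e)\Big)+k_{nb}\,b\frac{e}{1+e}+k_n\, n\frac{e}{1+e}-\lambda_{nb}\, n b-\lambda_{nn}n^2$$ in $R(t)<r<L$, $0<t<T$, with boundary conditions $(1-\gamma)n+\gamma L\big(\partial_r n-\frac{\chi_n}{D_n}\rho\, n\,H(1-n/n_m)\Phi(\partial_r e)\big)=0$ at $r=L$, $\partial_r n=0$ at $r=R(t)$, and initial condition $n(r,0)=0$. Here $\gamma\in[0,1]$ and $D_n,\chi_n,n_m,k_{nb},k_n,\lambda_{nb},\lambda_{nn},k_{sg}$ are positive constants. Then, with $$N=\max\Big\{\frac{k_{nb}}{\lambda_{nb}},\ \frac{k_n+\beta(\rho_m-1)}{\lambda_{nn}},\ n_m\Big\},$$ one has $0\le n(r,t)\le N$ in $\Omega_T$.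
   Context: Standing setting. Fix constants $L>0$, $0<R_0<L$, $\beta>0$, $T>0$. Let $R\in C^1([0,T))$ with $R(0)=R_0$ and $0<R(t)<L$, and set $\Omega_T=\{(r,t): R(t)\le r\le L,\ 0\le t<T\}$. Let $\rho\ge 0$ be a classical (continuously differentiable) function on $\Omega_T$ (the matrix density), and define the pressure $P(r,t)=P(\rho(r,t))$ where $P(\rho)=\beta(\rho-1)$ for $\rho\ge1$ and $P(\rho)=0$ for $\rho<1$. Let $v(r,t)$ be a classical function on $\Omega_T$ (twice continuously differentiable in $r$) satisfying $\frac1r\partial_r(r\,\partial_r v)-\frac{v}{r^2}=\partial_r P$ for $R(t)<r<L$, with $v(L,t)=0$, $\partial_r v(R(t),t)=P(R(t),t)$, and the free-boundary law $\dot R(t)=v(R(t),t)$. Define $Q(t)=\int_{R(t)}^L y\,P(y,t)\,dy$. Further notation: $H(u)=\dfrac{u^6}{10^{-6}+u^6}$ for $u\ge0$ and $H(u)=0$ for $u<0$; $\Phi(s)=s/\sqrt{1+k_{sg}s^2}$ with a constant $k_{sg}>0$ (the bounded chemotactic gradient response). *)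

From Stdlib Require Import Reals Lra.
Open Scope R_scope.

Definition Hsw (u : R) : R :=
  if Rle_dec 0 u then u ^ 6 / (/ 1000000 + u ^ 6) else 0.

Definition Phi (ksg s : R) : R := s / sqrt (1 + ksg * s ^ 2).

Definition Pres (beta x : R) : R :=
  if Rle_dec 1 x then beta * (x - 1) else 0.

Definition OmegaT (Rb : R -> R) (L T r t : R) : Prop :=
  Rb t <= r <= L /\ 0 <= t < T.

Definition OmegaI (Rb : R -> R) (L T r t : R) : Prop :=
  Rb t < r < L /\ 0 < t < T.

Definition cont2_on (f : R -> R -> R) (D : R -> R -> Prop) : Prop :=
  forall r t, D r t -> forall eps, 0 < eps -> exists delta, 0 < delta /\
    forall r' t', D r' t' -> Rabs (r' - r) < delta -> Rabs (t' - t) < delta ->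
      Rabs (f r' t' - f r t) < eps.

Definition cont1_on (f : R -> R) (S : R -> Prop) : Prop :=
  forall t, S t -> forall eps, 0 < eps -> exists delta, 0 < delta /\
    forall t', S t' -> Rabs (t' - t) < delta -> Rabs (f t' - f t) < eps.

From Stdlib Require Import Reals Lra Classical.
Open Scope R_scope.

(* Fix t0 < T.  On [0, t0] the free boundary stays in [m, Mx] with
   0 < m <= Mx < L and |v| <= V.  Take c in (Mx, L), K large, eps > 0 and
   compare n with the barrier n - eps ((r - c)^2 + K t).  It starts below N;
   at a first contact (ts, rs) with level N one has n > N >= nm, so the
   chemotactic flux is switched off near the contact point, and
   - rs = R(ts) is impossible: n_r = 0 there and the barrier increases into
     the domain because c > R(ts);
   - rs = L is impossible: the Robin condition gives n_r <= 0 and c < L;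
   - inside, n_r = 2 eps (rs - c), n_rr <= 2 eps and n_t >= eps K, while the
     equation, the divergence bound div v >= -beta (rho_m - 1) (from the
     velocity problem) and the choice of N give n_t < eps K.
   Letting eps -> 0 yields n <= N. *)

Ltac rcases := repeat match goal with
 | |- context [Rcase_abs ?x] => destruct (Rcase_abs x)
 | H: context [Rcase_abs ?x] |- _ => destruct (Rcase_abs x)
 | |- context [Rle_dec ?x ?y] => destruct (Rle_dec x y)
 | H: context [Rle_dec ?x ?y] |- _ => destruct (Rle_dec x y)
 end.
Ltac rsolve := unfold Rabs, Rmax, Rmin in *; rcases; lra.

(* The Stdlib derivative rules, restated for functions written as lambdas so
   that they apply directly to goals such as [derivable_pt_lim (fun y => ..) x l]. *)
Lemma D_plus f g x lf lg : derivable_pt_lim f x lf -> derivable_pt_lim g x lg ->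
  derivable_pt_lim (fun y => f y + g y) x (lf + lg).
Proof. exact (derivable_pt_lim_plus f g x lf lg). Qed.

Lemma D_minus f g x lf lg : derivable_pt_lim f x lf -> derivable_pt_lim g x lg ->
  derivable_pt_lim (fun y => f y - g y) x (lf - lg).
Proof. exact (derivable_pt_lim_minus f g x lf lg). Qed.

Lemma D_mult f g x lf lg : derivable_pt_lim f x lf -> derivable_pt_lim g x lg ->
  derivable_pt_lim (fun y => f y * g y) x (lf * g x + f x * lg).
Proof. exact (derivable_pt_lim_mult f g x lf lg). Qed.

Lemma D_div f g x lf lg : derivable_pt_lim f x lf -> derivable_pt_lim g x lg -> g x <> 0 ->
  derivable_pt_lim (fun y => f y / g y) x ((lf * g x - lg * f x) / (g x)²).
Proof. exact (derivable_pt_lim_div f g x lf lg). Qed.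

Lemma dpl_ext f x l l' : derivable_pt_lim f x l -> l = l' -> derivable_pt_lim f x l'.
Proof. intros H ->; exact H. Qed.

Lemma dpl_local f g x l d : 0 < d -> (forall y, Rabs (y - x) < d -> f y = g y) ->
  derivable_pt_lim f x l -> derivable_pt_lim g x l.
Proof.
  intros Hd Heq H eps He. destruct (H eps He) as [del Hdel].
  pose proof (cond_pos del) as Hdp. assert (Hp : 0 < Rmin del d) by rsolve.
  exists (mkposreal _ Hp); simpl; intros h Hh0 Hh.
  rewrite <- (Heq (x + h)), <- (Heq x).
  - apply Hdel; auto. simpl in *; rsolve.
  - rsolve.
  - replace (x + h - x) with h by ring. rsolve.
Qed.

Lemma dpl_zero_local f x d : 0 < d -> (forall y, Rabs (y - x) < d -> f y = 0) ->
  derivable_pt_lim f x 0.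
Proof.
  intros Hd H. apply (dpl_local (fun _ => 0) f x 0 d Hd).
  - intros y Hy; rewrite H; auto.
  - apply derivable_pt_lim_const.
Qed.

Lemma continuity_pt_intro f x : (forall eps, 0 < eps -> exists d, 0 < d /\
   forall y, Rabs (y - x) < d -> Rabs (f y - f x) < eps) -> continuity_pt f x.
Proof.
  intros H eps He. destruct (H eps He) as [d [Hd Hy]]. exists d; split; auto.
  intros y [_ Hy']. apply Hy; auto.
Qed.

Lemma continuity_pt_elim f x : continuity_pt f x -> forall eps, 0 < eps -> exists d, 0 < d /\
   forall y, Rabs (y - x) < d -> Rabs (f y - f x) < eps.
Proof.
  intros H eps He. destruct (H eps He) as [d [Hd Hy]]. exists d; split; auto.
  intros y Hy'. destruct (Req_dec y x) as [->|Hne].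
  - replace (f x - f x) with 0 by ring. rewrite Rabs_R0; lra.
  - apply Hy; split; auto. unfold D_x, no_cond; auto.
Qed.

Definition relcont1 (f : R -> R) (a b : R) : Prop :=
  forall x, a <= x <= b -> forall eps, 0 < eps -> exists delta, 0 < delta /\
    forall y, a <= y <= b -> Rabs (y - x) < delta -> Rabs (f y - f x) < eps.

(* The retraction of R onto [a,b]; composing with it extends a function
   on [a,b] by constants, which reduces relative continuity on [a,b] to
   ordinary continuity on R. *)
Definition clamp (a b y : R) : R := Rmax a (Rmin b y).

Lemma clamp_id a b x : a <= x <= b -> clamp a b x = x.
Proof. intros; unfold clamp; rsolve. Qed.

Lemma relcont_clamp f a b : a <= b -> relcont1 f a b ->
  forall x, continuity_pt (fun y => f (clamp a b y)) x.
Proof.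
  intros Hab Hf x. apply continuity_pt_intro. intros eps He.
  destruct (Hf (clamp a b x) ltac:(unfold clamp; rsolve) eps He) as [d [Hd Hy]].
  exists d; split; auto. intros y Hyx. apply Hy; unfold clamp; rsolve.
Qed.

Lemma relcont_of_clamp f a b :
  (forall x, a <= x <= b -> continuity_pt (fun y => f (clamp a b y)) x) -> relcont1 f a b.
Proof.
  intros Hf x Hx eps He. destruct (continuity_pt_elim _ x (Hf x Hx) eps He) as [d [Hd Hy]].
  exists d; split; auto. intros y Hy' Hyx.
  rewrite <- (clamp_id a b x), <- (clamp_id a b y); auto.
Qed.

Lemma relcont_sub f a b a' b' : relcont1 f a b -> a <= a' -> b' <= b -> relcont1 f a' b'.
Proof.
  intros H H1 H2 x Hx eps He. destruct (H x ltac:(lra) eps He) as [d [Hd Hyy]].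
  exists d; split; auto. intros y Hy Hyx. apply Hyy; auto; lra.
Qed.

Lemma relcont_of_pt f a b : (forall x, a <= x <= b -> continuity_pt f x) -> relcont1 f a b.
Proof.
  intros H x Hx eps He. destruct (continuity_pt_elim f x (H x Hx) eps He) as [d [Hd Hy]].
  exists d; split; auto.
Qed.

Lemma relcont_plus f g a b : relcont1 f a b -> relcont1 g a b ->
  relcont1 (fun y => f y + g y) a b.
Proof.
  intros Hf Hg. apply relcont_of_clamp. intros x Hx.
  apply (continuity_pt_plus (fun y => f (clamp a b y)) (fun y => g (clamp a b y)));
    apply relcont_clamp; auto; lra.
Qed.

Lemma relcont_minus f g a b : relcont1 f a b -> relcont1 g a b ->
  relcont1 (fun y => f y - g y) a b.
Proof.
  intros Hf Hg. apply relcont_of_clamp. intros x Hx.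
  apply (continuity_pt_minus (fun y => f (clamp a b y)) (fun y => g (clamp a b y)));
    apply relcont_clamp; auto; lra.
Qed.

Lemma relcont_mult f g a b : relcont1 f a b -> relcont1 g a b ->
  relcont1 (fun y => f y * g y) a b.
Proof.
  intros Hf Hg. apply relcont_of_clamp. intros x Hx.
  apply (continuity_pt_mult (fun y => f (clamp a b y)) (fun y => g (clamp a b y)));
    apply relcont_clamp; auto; lra.
Qed.

Lemma relcont_comp h f a b : (forall x, continuity_pt h x) -> relcont1 f a b ->
  relcont1 (fun y => h (f y)) a b.
Proof.
  intros Hh Hf. apply relcont_of_clamp. intros x Hx.
  apply (continuity_pt_comp (fun y => f (clamp a b y)) h); auto.
  apply relcont_clamp; auto; lra.
Qed.

(* Mean value theorem for a function continuous on [a,b] (relative to [a,b])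
   and differentiable inside; obtained from Stdlib's [MVT] applied to f o clamp. *)
Lemma MVT_rel f g a b : a < b -> relcont1 f a b ->
  (forall x, a < x < b -> derivable_pt_lim f x (g x)) ->
  exists xi, a < xi < b /\ f b - f a = g xi * (b - a).
Proof.
  intros Hab Hc Hd.
  set (F := fun y => f (clamp a b y)).
  assert (HF : forall x, a < x < b -> derivable_pt_lim F x (g x)).
  { intros x Hx. apply (dpl_local f F x (g x) (Rmin (x - a) (b - x))).
    - rsolve.
    - intros y Hy. unfold F. rewrite clamp_id; auto. rsolve.
    - apply Hd; auto. }
  pose (pr1 := fun c (P : a < c < b) =>
    exist (fun l => derivable_pt_lim F c l) (g c) (HF c P)).
  pose (pr2 := fun c (P : a < c < b) => derivable_pt_id c).
  destruct (MVT F id a b pr1 pr2 Hab (fun x _ => relcont_clamp f a b ltac:(lra) Hc x)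
              (fun c _ => derivable_continuous_pt _ _ (derivable_pt_id c)))
    as [c [P Hc']].
  exists c; split; auto.
  simpl in Hc'. rewrite derive_pt_id in Hc'. unfold id, F in Hc'.
  rewrite !clamp_id in Hc' by lra. lra.
Qed.

Lemma const_of_deriv0 f a b : relcont1 f a b ->
  (forall x, a < x < b -> derivable_pt_lim f x 0) -> forall y, a <= y <= b -> f y = f a.
Proof.
  intros Hc Hd y Hy. destruct (Req_dec y a) as [->|Hne]; auto.
  destruct (MVT_rel f (fun _ => 0) a y ltac:(lra) (relcont_sub f a b a y Hc ltac:(lra) ltac:(lra)))
    as [xi [_ Hm]].
  - intros x Hx. apply Hd. lra.
  - lra.
Qed.

Lemma nonincr_of_deriv_nonpos f g a b : a < b -> relcont1 f a b ->
  (forall x, a < x < b -> derivable_pt_lim f x (g x)) ->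
  (forall x, a < x < b -> g x <= 0) -> f b <= f a.
Proof.
  intros Hab Hc Hd Hg. destruct (MVT_rel f g a b Hab Hc Hd) as [xi [Hxi Hm]].
  pose proof (Hg xi Hxi). nra.
Qed.

Lemma incr_left f g a b : a < b -> relcont1 f a b -> relcont1 g a b ->
  (forall x, a < x < b -> derivable_pt_lim f x (g x)) -> 0 < g a ->
  exists x, a < x <= b /\ f a < f x.
Proof.
  intros Hab Hf Hg Hd Hga.
  destruct (Hg a ltac:(lra) (g a) Hga) as [d [Hd0 Hy]].
  set (x := Rmin b (a + d / 2)).
  assert (Hx : a < x <= b) by (unfold x; rsolve).
  destruct (MVT_rel f g a x ltac:(lra) (relcont_sub f a b a x Hf ltac:(lra) ltac:(lra)))
    as [xi [Hxi Heq]].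
  { intros y Hy0. apply Hd. lra. }
  exists x; split; auto.
  assert (Habs : Rabs (g xi - g a) < g a) by (apply Hy; [lra| unfold x in *; rsolve]).
  assert (0 < g xi) by rsolve. nra.
Qed.

Lemma incr_right f g a b : a < b -> relcont1 f a b -> relcont1 g a b ->
  (forall x, a < x < b -> derivable_pt_lim f x (g x)) -> g b < 0 ->
  exists x, a <= x < b /\ f b < f x.
Proof.
  intros Hab Hf Hg Hd Hgb.
  destruct (Hg b ltac:(lra) (- g b) ltac:(lra)) as [d [Hd0 Hy]].
  set (x := Rmax a (b - d / 2)).
  assert (Hx : a <= x < b) by (unfold x; rsolve).
  destruct (MVT_rel f g x b ltac:(lra) (relcont_sub f a b x b Hf ltac:(lra) ltac:(lra)))
    as [xi [Hxi Heq]].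
  { intros y Hy0. apply Hd. lra. }
  exists x; split; auto.
  assert (Habs : Rabs (g xi - g b) < - g b) by (apply Hy; [lra| unfold x in *; rsolve]).
  assert (g xi < 0) by rsolve. nra.
Qed.

Lemma sign_right f c l d : derivable_pt_lim f c l -> 0 < d ->
  (forall h, 0 < h < d -> f (c + h) <= f c) -> l <= 0.
Proof.
  intros H Hd Hh. destruct (Rle_or_lt l 0) as [|Hl]; auto.
  destruct (H l Hl) as [del Hdel]. pose proof (cond_pos del).
  set (h := Rmin del d / 2).
  assert (Hh0 : 0 < h < d) by (unfold h; rsolve).
  assert (Hhd : Rabs h < del) by (unfold h; rsolve).
  specialize (Hdel h ltac:(lra) Hhd). specialize (Hh h Hh0).
  assert ((f (c + h) - f c) / h <= 0).
  { unfold Rdiv. assert (0 < / h) by (apply Rinv_0_lt_compat; lra). nra. }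
  rsolve.
Qed.

Lemma sign_left f c l d : derivable_pt_lim f c l -> 0 < d ->
  (forall h, 0 < h < d -> f (c - h) <= f c) -> 0 <= l.
Proof.
  intros H Hd Hh. destruct (Rle_or_lt 0 l) as [|Hl]; auto.
  destruct (H (-l) ltac:(lra)) as [del Hdel]. pose proof (cond_pos del).
  set (h := Rmin del d / 2).
  assert (Hh0 : 0 < h < d) by (unfold h; rsolve).
  assert (Hhd : Rabs (-h) < del) by (unfold h; rsolve).
  specialize (Hdel (-h) ltac:(lra) Hhd). specialize (Hh h Hh0).
  replace (c + - h) with (c - h) in Hdel by ring.
  assert (0 <= (f (c - h) - f c) / - h).
  { unfold Rdiv. assert (0 < / h) by (apply Rinv_0_lt_compat; lra).
    rewrite Rinv_opp. nra. }
  rsolve.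
Qed.

Lemma max_deriv0 f c l d : derivable_pt_lim f c l -> 0 < d ->
  (forall y, Rabs (y - c) < d -> f y <= f c) -> l = 0.
Proof.
  intros H Hd Hy.
  assert (l <= 0) by (apply (sign_right f c l d H Hd); intros h Hh; apply Hy; rsolve).
  assert (0 <= l) by (apply (sign_left f c l d H Hd); intros h Hh; apply Hy; rsolve).
  lra.
Qed.

Lemma max_deriv2 f g c l d : 0 < d -> g c = 0 -> derivable_pt_lim g c l ->
  (forall y, Rabs (y - c) < d -> derivable_pt_lim f y (g y) /\ f y <= f c) -> l <= 0.
Proof.
  intros Hd Hg0 Hg Hy. destruct (Rle_or_lt l 0) as [|Hl]; auto.
  destruct (Hg (l/2) ltac:(lra)) as [del Hdel]. pose proof (cond_pos del).
  set (h := Rmin del d / 2).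
  assert (Hh0 : 0 < h < d) by (unfold h; rsolve).
  destruct (MVT_cor2 f g c (c + h) ltac:(lra)) as [xi [Heq Hxi]].
  { intros y Hy'. apply Hy. rsolve. }
  assert (Hgx : 0 < g xi).
  { specialize (Hdel (xi - c) ltac:(lra) ltac:(unfold h in *; rsolve)).
    replace (c + (xi - c)) with xi in Hdel by ring. rewrite Hg0 in Hdel.
    assert (Hq : l / 2 < (g xi - 0) / (xi - c)) by rsolve.
    unfold Rdiv in Hq. assert (0 < / (xi - c)) by (apply Rinv_0_lt_compat; lra).
    destruct (Rle_or_lt (g xi) 0); auto. nra. }
  assert (f c < f (c + h)) by nra.
  assert (f (c + h) <= f c) by (apply Hy; rsolve). lra.
Qed.

Lemma local_to_global (a b : R) (P : R -> R -> Prop) : a <= b ->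
  (forall u v u' v', P u v -> u <= u' -> v' <= v -> P u' v') ->
  (forall u v w z, P u v -> P w z -> u < w -> w < v -> v < z -> P u z) ->
  (forall x, a <= x <= b -> exists d, 0 < d /\ P (x - d) (x + d)) ->
  exists u v, u < a /\ b < v /\ P u v.
Proof.
  intros Hab Hs Hg Hl.
  set (S := fun x => a <= x <= b /\ exists u v, u < a /\ x < v /\ P u v).
  assert (HSa : S a).
  { destruct (Hl a ltac:(lra)) as [d [Hd HP]]. split; [lra|]. exists (a - d), (a + d).
    repeat split; auto; lra. }
  destruct (completeness S) as [s [Hub Hlub]].
  { exists b. intros x [Hx _]. lra. }
  { exists a; auto. }
  assert (Has : a <= s) by (apply Hub; auto).
  assert (Hsb : s <= b) by (apply Hlub; intros x [Hx _]; lra).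
  destruct (Hl s ltac:(lra)) as [d [Hd HP]].
  assert (Hx : exists x, S x /\ s - d < x).
  { apply NNPP; intro Hn. assert (s <= s - d); [|lra].
    apply Hlub. intros x Hx. destruct (Rle_or_lt x (s - d)); auto.
    exfalso; apply Hn; exists x; auto. }
  destruct Hx as [x [[Hx1 [u [v [Hu [Hxv HPuv]]]]] Hsx]].
  assert (HUV : exists U V, U < a /\ s < V /\ P U V).
  { destruct (Rle_or_lt (s + d) v).
    - exists u, v. repeat split; auto; lra.
    - destruct (Rlt_or_le u (s - d)).
      + exists u, (s + d). repeat split; auto; try lra.
        apply (Hg u v (s - d) (s + d)); auto; lra.
      + exists (s - d), (s + d). repeat split; auto; lra. }
  destruct HUV as [U [V [HU [HV HPUV]]]].
  destruct (Rlt_or_le s b) as [Hsb'|Hsb'].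
  - exfalso. set (x' := Rmin b ((s + V) / 2)).
    assert (S x').
    { split; [unfold x'; rsolve|]. exists U, V; repeat split; auto. unfold x'; rsolve. }
    assert (x' <= s) by (apply Hub; auto). unfold x' in *; rsolve.
  - exists U, V. repeat split; auto; lra.
Qed.

Section MovingDomain.
Variables (Rb : R -> R) (L T : R).
Hypothesis HRb_cont : cont1_on Rb (fun t => 0 <= t < T).
Hypothesis HRb_range : forall t, 0 <= t < T -> 0 < Rb t < L.

Lemma uniform_near_time (Q : R -> R -> R -> Prop) t : 0 <= t < T ->
  (forall M M' r s, Q M r s -> M <= M' -> Q M' r s) ->
  (forall r, Rb t <= r <= L -> exists d M, 0 < d /\ forall r' s, OmegaT Rb L T r' s ->
      Rabs (r' - r) < d -> Rabs (s - t) < d -> Q M r' s) ->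
  exists d M, 0 < d /\ forall r s, OmegaT Rb L T r s -> Rabs (s - t) < d -> Q M r s.
Proof.
  intros Ht Hmono Hloc.
  pose proof (HRb_range t Ht) as HR.
  destruct (local_to_global (Rb t) L (fun u w => exists d M, 0 < d /\ forall r' s,
     OmegaT Rb L T r' s -> u < r' < w -> Rabs (s - t) < d -> Q M r' s))
    as [u [w [Hu [Hw HP]]]].
  - lra.
  - intros u v u' v' [d [M [Hd H]]] H1 H2. exists d, M; split; auto.
    intros r' s Ho Hr Hs. apply H; auto; lra.
  - intros u v w' z [d1 [M1 [Hd1 H1]]] [d2 [M2 [Hd2 H2]]] H3 H4 H5.
    exists (Rmin d1 d2), (Rmax M1 M2); split; [rsolve|].
    intros r' s Ho Hr Hs. destruct (Rlt_or_le r' v).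
    + apply (Hmono M1). apply H1; auto; [lra|rsolve]. rsolve.
    + apply (Hmono M2). apply H2; auto; [lra|rsolve]. rsolve.
  - intros x Hx. destruct (Hloc x Hx) as [d [M [Hd H]]]. exists d; split; auto.
    exists d, M; split; auto. intros r' s Ho Hr Hs. apply H; auto. rsolve.
  - destruct HP as [d1 [M [Hd1 H1]]].
    destruct (HRb_cont t Ht (Rb t - u) ltac:(lra)) as [d2 [Hd2 H2]].
    exists (Rmin d1 d2), M; split; [rsolve|].
    intros r s Ho Hs. destruct Ho as [Hr Hs'].
    assert (Rabs (Rb s - Rb t) < Rb t - u) by (apply H2; [lra|rsolve]).
    apply H1; [split; auto| |rsolve]. split; rsolve.
Qed.

Lemma bounded_up_to f t0 : cont2_on f (OmegaT Rb L T) -> 0 <= t0 < T ->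
  exists V, forall r s, OmegaT Rb L T r s -> s <= t0 -> Rabs (f r s) <= V.
Proof.
  intros Hf Ht0.
  destruct (local_to_global 0 t0 (fun u w => exists V, forall r s,
     OmegaT Rb L T r s -> u < s < w -> Rabs (f r s) <= V)) as [u [w [Hu [Hw [V HV]]]]].
  - lra.
  - intros u v u' v' [V H] H1 H2. exists V. intros r s Ho Hs. apply H; auto; lra.
  - intros u v w' z [V1 H1] [V2 H2] H3 H4 H5. exists (Rmax V1 V2).
    intros r s Ho Hs. destruct (Rlt_or_le s v).
    + specialize (H1 r s Ho ltac:(lra)). rsolve.
    + specialize (H2 r s Ho ltac:(lra)). rsolve.
  - intros t Ht.
    destruct (uniform_near_time (fun M r s => Rabs (f r s) <= M) t ltac:(lra))
      as [d [M [Hd H]]].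
    + intros M M' r s H1 H2; lra.
    + intros r Hr. destruct (Hf r t ltac:(split; [auto|lra]) 1 ltac:(lra)) as [d [Hd H]].
      exists d, (Rabs (f r t) + 1); split; auto. intros r' s Ho H1 H2.
      specialize (H r' s Ho H1 H2). rsolve.
    + exists d; split; auto. exists M. intros r s Ho Hs. apply H; auto. rsolve.
  - exists V. intros r s Ho Hs. apply HV; auto. destruct Ho. lra.
Qed.

Lemma boundary_bounds t0 : 0 <= t0 < T ->
  exists m Mx, 0 < m /\ Mx < L /\ forall s, 0 <= s <= t0 -> m <= Rb s <= Mx.
Proof.
  intros Ht0.
  destruct (local_to_global 0 t0 (fun u w => exists m Mx, 0 < m /\ Mx < L /\ forall s,
     0 <= s < T -> u < s < w -> m <= Rb s <= Mx)) as [u [w [Hu [Hw [m [Mx [Hm [HM H]]]]]]]].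
  - lra.
  - intros u v u' v' [m [Mx [H0 [H1 H]]]] H2 H3. exists m, Mx; repeat split; auto;
    intros; apply H; auto; lra.
  - intros u v w' z [m1 [M1 [Hm1 [HM1 H1]]]] [m2 [M2 [Hm2 [HM2 H2]]]] H3 H4 H5.
    exists (Rmin m1 m2), (Rmax M1 M2); split; [rsolve|split; [rsolve|]].
    intros s Hs Hs'. destruct (Rlt_or_le s v).
    + specialize (H1 s Hs ltac:(lra)). rsolve.
    + specialize (H2 s Hs ltac:(lra)). rsolve.
  - intros t Ht. pose proof (HRb_range t ltac:(lra)) as HR.
    destruct (HRb_cont t ltac:(lra) (Rmin (Rb t) (L - Rb t) / 2) ltac:(rsolve)) as [d [Hd H]].
    exists d; split; auto. exists (Rb t / 2), ((Rb t + L) / 2).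
    split; [lra|split; [lra|]]. intros s Hs Hs'.
    assert (Rabs (Rb s - Rb t) < Rmin (Rb t) (L - Rb t) / 2) by (apply H; auto; rsolve).
    rsolve.
  - exists m, Mx; repeat split; auto; apply H; lra.
Qed.

Lemma strict_bound_persists z N t : cont2_on z (OmegaT Rb L T) -> 0 <= t < T ->
  (forall r, Rb t <= r <= L -> z r t < N) ->
  exists d, 0 < d /\ forall r s, OmegaT Rb L T r s -> Rabs (s - t) < d -> z r s < N.
Proof.
  intros Hz Ht Hlt.
  destruct (uniform_near_time (fun _ r s => z r s < N) t Ht) as [d [M [Hd H]]].
  - auto.
  - intros r Hr. specialize (Hlt r Hr).
    destruct (Hz r t ltac:(split; [auto|lra]) (N - z r t) ltac:(lra)) as [d [Hd H]].
    exists d, 0; split; auto. intros r' s Ho H1 H2. specialize (H r' s Ho H1 H2). rsolve.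
  - exists d; split; [auto|]. intros; eapply H; eauto.
Qed.

Lemma bound_at_limit_time z N ts : cont2_on z (OmegaT Rb L T) -> 0 < ts < T ->
  (forall s r, 0 <= s < ts -> Rb s <= r <= L -> z r s < N) ->
  forall r, Rb ts <= r <= L -> z r ts <= N.
Proof.
  intros Hz Hts Hbefore r Hr.
  destruct (Rle_or_lt (z r ts) N) as [|Hgt]; auto. exfalso.
  assert (HtsT : 0 <= ts < T) by lra.
  pose proof (HRb_range ts HtsT) as HRts.
  destruct (Hz r ts (conj Hr HtsT) (z r ts - N) ltac:(lra)) as [d [Hd Hzd]].
  set (r' := Rmin L (r + d / 2)).
  assert (Hr' : Rb ts < r' <= L /\ Rabs (r' - r) < d) by (unfold r'; rsolve).
  destruct (HRb_cont ts HtsT (r' - Rb ts) ltac:(lra)) as [d2 [Hd2 HR2]].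
  set (s := ts - Rmin (Rmin d d2) ts / 2).
  assert (Hs : 0 <= s < ts /\ Rabs (s - ts) < d /\ Rabs (s - ts) < d2) by (unfold s; rsolve).
  assert (HRs : Rabs (Rb s - Rb ts) < r' - Rb ts) by (apply HR2; lra).
  specialize (Hzd r' s ltac:(split; [rsolve|lra]) ltac:(lra) ltac:(lra)).
  assert (z r' s < N) by (apply Hbefore; [lra|rsolve]).
  rsolve.
Qed.

Definition first_contact (z : R -> R -> R) (N ts rs : R) : Prop :=
  0 < ts /\ Rb ts <= rs <= L /\ z rs ts = N /\
  (forall r, Rb ts <= r <= L -> z r ts <= N) /\
  (forall s r, 0 <= s < ts -> Rb s <= r <= L -> z r s < N).

Lemma below_or_first_contact z N t0 : cont2_on z (OmegaT Rb L T) -> 0 <= t0 < T ->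
  (forall r, Rb 0 <= r <= L -> z r 0 < N) ->
  (forall r, Rb t0 <= r <= L -> z r t0 <= N) \/
  exists ts rs, ts < t0 /\ first_contact z N ts rs.
Proof.
  intros Hz Ht0 Hinit.
  set (S := fun t => 0 <= t <= t0 /\
    forall s r, 0 <= s <= t -> Rb s <= r <= L -> z r s < N).
  assert (HS0 : S 0).
  { split; [lra|]. intros s r Hs Hr. replace s with 0 in * by lra. auto. }
  destruct (completeness S) as [ts [Hub Hlub]].
  { exists t0. intros x [Hx _]. lra. }
  { exists 0; auto. }
  assert (Hts : 0 <= ts <= t0) by (split; [apply Hub | apply Hlub]; auto;
    intros x [Hx _]; lra).
  assert (Hbefore : forall s r, 0 <= s < ts -> Rb s <= r <= L -> z r s < N).
  { intros s r Hs Hr. apply NNPP; intro Hn.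
    assert (ts <= s); [|lra]. apply Hlub. intros x [Hx Hx']. destruct (Rle_or_lt x s); auto.
    exfalso; apply Hn. apply (Hx' s r); auto; lra. }
  assert (Hat : forall r, Rb ts <= r <= L -> z r ts <= N).
  { destruct (Req_dec ts 0) as [->|Hne].
    - intros r Hr. apply Rlt_le, Hinit; auto.
    - apply bound_at_limit_time; auto; lra. }
  destruct (Req_dec ts t0) as [<-|Hne]; [left; exact Hat|right].
  destruct (classic (exists rs, Rb ts <= rs <= L /\ z rs ts = N)) as [[rs [Hrs Hzrs]]|Hn].
  - exists ts, rs. split; [lra|].
    refine (conj _ (conj Hrs (conj Hzrs (conj Hat Hbefore)))).
    destruct (Req_dec ts 0) as [Heq|]; [|lra]. rewrite Heq in *.
    pose proof (Hinit rs Hrs). lra.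
  - exfalso.
    assert (Hall : forall r, Rb ts <= r <= L -> z r ts < N).
    { intros r Hr. destruct (Rle_lt_or_eq _ _ (Hat r Hr)); auto.
      exfalso; apply Hn; exists r; auto. }
    destruct (strict_bound_persists z N ts Hz ltac:(lra) Hall) as [d [Hd Hext]].
    set (t' := Rmin t0 (ts + d / 2)).
    assert (S t').
    { split; [unfold t'; rsolve|]. intros s r Hs Hr.
      destruct (Rlt_or_le s ts).
      - apply Hbefore; auto; lra.
      - apply Hext; [split; [auto|unfold t' in Hs; rsolve]|]. unfold t' in Hs; rsolve. }
    assert (t' <= ts) by (apply Hub; auto). unfold t' in *; rsolve.
Qed.

End MovingDomain.

Lemma Pres_bounds beta rm x : 0 < beta -> 1 <= rm -> x < rm ->
  0 <= Pres beta x <= beta * (rm - 1).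
Proof. intros Hb Hr Hx. unfold Pres. rcases; nra. Qed.

Lemma Pres_continuous beta x : 0 < beta -> continuity_pt (Pres beta) x.
Proof.
  intros Hb. apply continuity_pt_intro. intros eps He.
  exists (eps / beta); split; [apply Rdiv_lt_0_compat; lra|]. intros y Hy.
  assert (Hlip : Rabs (Pres beta y - Pres beta x) <= beta * Rabs (y - x))
    by (unfold Pres, Rabs; rcases; nra).
  apply (Rmult_lt_compat_l beta) in Hy; auto.
  replace (beta * (eps / beta)) with eps in Hy by (field; lra). lra.
Qed.

Lemma Hsw_neg u : u < 0 -> Hsw u = 0.
Proof. intros Hu. unfold Hsw. rcases; lra. Qed.

(* Indeed v' + v/y - p is constant, equal to
   c0 = v(a)/a, and W = y v - (c0 + B) y^2/2 has W' = y (p - B) <= 0, so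
   W(L) <= W(a), which forces c0 >= -B. *)
Lemma velocity_divergence_bound (a L B : R) (v vr vrr p pr : R -> R) : 0 < a < L ->
  relcont1 v a L -> relcont1 vr a L -> relcont1 p a L ->
  (forall y, a < y < L -> derivable_pt_lim v y (vr y)) ->
  (forall y, a < y < L -> derivable_pt_lim vr y (vrr y)) ->
  (forall y, a < y < L -> derivable_pt_lim p y (pr y)) ->
  (forall y, a < y < L -> / y * (vr y + y * vrr y) - v y / y ^ 2 = pr y) ->
  v L = 0 -> vr a = p a -> (forall y, a <= y <= L -> 0 <= p y <= B) ->
  forall y, a < y < L -> - B <= vr y + v y / y.
Proof.
  intros Ha Hv Hvr Hp Dv Dvr Dp Heq HvL Hva Hpb.
  set (c0 := v a / a).
  assert (Hinv : relcont1 (fun y => / y) a L).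
  { apply relcont_of_pt. intros x Hx. apply (continuity_pt_inv (fun y => y)); [|lra].
    apply derivable_continuous_pt, derivable_pt_id. }
  assert (HG : forall y, a <= y <= L -> vr y + v y / y - p y = c0).
  { set (G := fun y => vr y + v y / y - p y).
    assert (G a = c0) by (unfold G, c0; rewrite Hva; ring).
    intros y Hy. change (G y = c0). rewrite <- H.
    apply (const_of_deriv0 G a L); auto.
    - apply relcont_minus; auto. apply relcont_plus; auto. apply relcont_mult; auto.
    - intros x Hx. eapply dpl_ext.
      + apply D_minus; [apply D_plus; [apply Dvr; auto|]|apply Dp; auto].
        apply D_div; [apply Dv; auto|apply derivable_pt_lim_id|lra].
      + rewrite <- (Heq x Hx). unfold Rsqr. field. lra. }
  set (W := fun y => y * v y - (c0 + B) / 2 * (y * y)).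
  assert (HW : W L <= W a).
  { apply (nonincr_of_deriv_nonpos W (fun y => y * (p y - B)) a L); try lra.
    - apply relcont_minus; [apply relcont_mult; auto|]; apply relcont_of_pt; intros; reg.
    - intros y Hy. eapply dpl_ext.
      + apply D_minus; apply D_mult;
          [apply derivable_pt_lim_id | apply Dv; auto | apply derivable_pt_lim_const |].
        apply D_mult; apply derivable_pt_lim_id.
      + pose proof (HG y ltac:(lra)) as Hg.
        replace (v y) with (y * (c0 + p y - vr y)).
        * cbv beta. field.
        * replace (c0 + p y - vr y) with (v y / y) by lra. field. lra.
    - intros y Hy. pose proof (Hpb y ltac:(lra)). nra. }
  assert (Hc0 : - B <= c0).
  { unfold W in HW. rewrite HvL in HW.
    replace (v a) with (c0 * a) in HW by (unfold c0; field; lra).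
    pose proof (Hpb a ltac:(lra)).
    assert (Hsum : 2 * B * (a * a) <= (c0 + B) * (L * L + a * a)) by nra.
    destruct (Rle_or_lt (- B) c0) as [|Hlt]; auto.
    assert (0 < L * L + a * a) by nra. nra. }
  intros y Hy. pose proof (HG y ltac:(lra)). pose proof (Hpb y ltac:(lra)). lra.
Qed.

Lemma slice_relcont Rb L T f t : cont2_on f (OmegaT Rb L T) -> 0 <= t < T ->
  relcont1 (fun y => f y t) (Rb t) L.
Proof.
  intros Hf Ht x Hx eps He. destruct (Hf x t (conj Hx Ht) eps He) as [d [Hd H]].
  exists d; split; auto. intros y Hy Hyx. apply H; auto; [split; auto|].
  replace (t - t) with 0 by ring. rewrite Rabs_R0; auto.
Qed.

Lemma cont2_sub_sum f g h D : cont2_on f D ->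
  (forall x, continuity_pt g x) -> (forall x, continuity_pt h x) ->
  cont2_on (fun r s => f r s - (g r + h s)) D.
Proof.
  intros Hf Hg Hh r t HD eps He.
  destruct (Hf r t HD (eps / 3) ltac:(lra)) as [d1 [Hd1 H1]].
  destruct (continuity_pt_elim g r (Hg r) (eps / 3) ltac:(lra)) as [d2 [Hd2 H2]].
  destruct (continuity_pt_elim h t (Hh t) (eps / 3) ltac:(lra)) as [d3 [Hd3 H3]].
  exists (Rmin d1 (Rmin d2 d3)); split; [rsolve|]. intros r' t' HD' Hr Ht.
  specialize (H1 r' t' HD' ltac:(rsolve) ltac:(rsolve)).
  specialize (H2 r' ltac:(rsolve)). specialize (H3 t' ltac:(rsolve)). rsolve.
Qed.

Lemma le_of_le_plus_eps x y A : 0 <= A -> (forall eps, 0 < eps -> x <= y + eps * A) -> x <= y.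
Proof.
  intros HA H. destruct (Rle_or_lt x y) as [|Hlt]; auto.
  set (eps := (x - y) / (A + 1)).
  assert (He : 0 < eps) by (apply Rdiv_lt_0_compat; lra).
  assert (HeA : eps * A = (x - y) - eps) by (unfold eps; field; lra).
  specialize (H eps He). lra.
Qed.

(* Above the level N the logistic losses dominate the production terms and
   the dilution B n (E = e/(1+e) lies in [0,1]). *)
Lemma reaction_dominated knb kn lnb lnn B N nn bb E :
  0 <= knb -> 0 <= kn -> 0 <= lnb -> 0 <= lnn ->
  knb <= lnb * N -> kn + B <= lnn * N -> 0 <= N <= nn -> 0 <= bb -> 0 <= E <= 1 ->
  knb * bb * E + kn * nn * E - lnb * nn * bb - lnn * nn ^ 2 + B * nn <= 0.
Proof.
  intros.
  assert (bb * (knb * E - lnb * nn) <= 0).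
  { assert (knb * E <= knb) by nra. assert (lnb * N <= lnb * nn) by nra. nra. }
  assert (nn * (kn * E + B - lnn * nn) <= 0).
  { assert (kn * E <= kn) by nra. assert (lnn * N <= lnn * nn) by nra. nra. }
  nra.
Qed.

Lemma activation_bounds e : 0 <= e -> 0 <= e / (1 + e) <= 1.
Proof.
  intros He. split; [apply Rmult_le_pos; [|apply Rlt_le, Rinv_0_lt_compat]; lra|].
  apply (Rmult_le_reg_r (1 + e)); [lra|].
  unfold Rdiv. rewrite Rmult_assoc, Rinv_l; lra.
Qed.

Lemma gradient_terms_bound eps Dn c m rs L vv V : 0 < eps -> 0 < Dn ->
  0 < m <= rs -> rs <= L -> 0 < c <= L -> Rabs vv <= V ->
  Dn * (eps * (2 * (rs - c))) / rs - vv * (eps * (2 * (rs - c)))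
    <= eps * (Dn * (2 * L / m) + 2 * V * L).
Proof.
  intros He HDn Hm HrsL Hc Hv.
  assert (Hdiff : (rs - c) / rs <= L / m).
  { unfold Rdiv. apply Rle_trans with (L * / rs).
    - apply Rmult_le_compat_r; [apply Rlt_le, Rinv_0_lt_compat|]; lra.
    - apply Rmult_le_compat_l; [|apply Rinv_le_contravar]; lra. }
  assert (Hadv : - (vv * (rs - c)) <= V * L).
  { apply Rle_trans with (Rabs (vv * (rs - c))); [rewrite <- Rabs_Ropp; apply Rle_abs|].
    rewrite Rabs_mult. apply Rmult_le_compat; auto using Rabs_pos. rsolve. }
  replace (Dn * (eps * (2 * (rs - c))) / rs - vv * (eps * (2 * (rs - c))))
    with (2 * eps * (Dn * ((rs - c) / rs) + - (vv * (rs - c)))) by (field; lra).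
  replace (eps * (Dn * (2 * L / m) + 2 * V * L)) with (2 * eps * (Dn * (L / m) + V * L))
    by (field; lra).
  apply Rmult_le_compat_l; [lra|].
  apply Rplus_le_compat; [apply Rmult_le_compat_l|]; lra.
Qed.

Lemma Hsw_above_saturation u nm : 0 < nm -> nm < u -> Hsw (1 - u / nm) = 0.
Proof.
  intros Hnm Hu. apply Hsw_neg.
  assert (Hq : u / nm * nm = u) by (field; lra). nra.
Qed.

Section CellDensity.
Variables (L T beta rho_m : R) (Rb : R -> R) (rho v v_r v_rr P_r : R -> R -> R).
Hypothesis HRb_cont : cont1_on Rb (fun t => 0 <= t < T).
Hypothesis HRb_range : forall t, 0 <= t < T -> 0 < Rb t < L.
Hypothesis Hbeta : 0 < beta.
Hypothesis Hrho_m : 1 < rho_m.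
Hypothesis Hrho_bd : forall r t, OmegaT Rb L T r t -> 0 <= rho r t < rho_m.
Hypothesis Hrho_cont : cont2_on rho (OmegaT Rb L T).
Hypothesis Hv_cont : cont2_on v (OmegaT Rb L T).
Hypothesis Hv_r_cont : cont2_on v_r (OmegaT Rb L T).
Hypothesis Hv_r : forall r t, OmegaI Rb L T r t ->
  derivable_pt_lim (fun y => v y t) r (v_r r t).
Hypothesis Hv_rr : forall r t, OmegaI Rb L T r t ->
  derivable_pt_lim (fun y => v_r y t) r (v_rr r t).
Hypothesis HP_r : forall r t, OmegaI Rb L T r t ->
  derivable_pt_lim (fun y => Pres beta (rho y t)) r (P_r r t).
Hypothesis Hv_eq : forall r t, OmegaI Rb L T r t ->
  / r * (v_r r t + r * v_rr r t) - v r t / r ^ 2 = P_r r t.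
Hypothesis Hv_L : forall t, 0 <= t < T -> v L t = 0.
Hypothesis Hv_R : forall t, 0 <= t < T -> v_r (Rb t) t = Pres beta (rho (Rb t) t).

Lemma divergence_lower_bound r t : OmegaI Rb L T r t ->
  - (beta * (rho_m - 1)) <= v_r r t + v r t / r.
Proof.
  intros [Hr Ht]. assert (Ht' : 0 <= t < T) by lra.
  pose proof (HRb_range t Ht').
  apply (velocity_divergence_bound (Rb t) L _ (fun y => v y t) (fun y => v_r y t)
    (fun y => v_rr y t) (fun y => Pres beta (rho y t)) (fun y => P_r y t)); try lra;
    try (intros y Hy; cbv beta; first [apply Hv_r | apply Hv_rr | apply HP_r | apply Hv_eq];
         split; auto; lra).
  - apply (slice_relcont Rb L T); auto.
  - apply (slice_relcont Rb L T); auto.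
  - apply relcont_comp; [intros; apply Pres_continuous; auto|apply (slice_relcont Rb L T); auto].
  - apply Hv_L; auto.
  - apply Hv_R; auto.
  - intros y Hy. apply Pres_bounds; try lra. apply Hrho_bd. split; auto.
Qed.

Variables (b e e_r : R -> R -> R) (gamma Dn chin nm knb kn lnb lnn ksg : R).
Variables (n n_r n_rr n_t : R -> R -> R).
Hypothesis Hb_nonneg : forall r t, OmegaT Rb L T r t -> 0 <= b r t.
Hypothesis He_nonneg : forall r t, OmegaT Rb L T r t -> 0 <= e r t.
Hypothesis Hgamma : 0 <= gamma <= 1.
Hypothesis HDn : 0 < Dn.
Hypothesis Hnm : 0 < nm.
Hypothesis Hknb : 0 < knb.
Hypothesis Hkn : 0 < kn.
Hypothesis Hlnb : 0 < lnb.
Hypothesis Hlnn : 0 < lnn.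
Hypothesis Hn_cont : cont2_on n (OmegaT Rb L T).
Hypothesis Hn_r_cont : cont2_on n_r (OmegaT Rb L T).
Hypothesis Hn_r : forall r t, OmegaI Rb L T r t ->
  derivable_pt_lim (fun y => n y t) r (n_r r t).
Hypothesis Hn_rr : forall r t, OmegaI Rb L T r t ->
  derivable_pt_lim (fun y => n_r y t) r (n_rr r t).
Hypothesis Hn_t : forall r t, OmegaI Rb L T r t ->
  derivable_pt_lim (fun s => n r s) t (n_t r t).
Hypothesis Hn_eq : forall r t, OmegaI Rb L T r t ->
  exists a1 a2 a3,
    derivable_pt_lim (fun y => y * v y t * n y t) r a1 /\
    derivable_pt_lim (fun y => y * Dn * n_r y t) r a2 /\
    derivable_pt_lim (fun y => y * chin * rho y t * n y t
                                * Hsw (1 - n y t / nm) * Phi ksg (e_r y t)) r a3 /\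
    n_t r t + / r * a1 =
      / r * a2 - / r * a3
      + knb * b r t * (e r t / (1 + e r t))
      + kn * n r t * (e r t / (1 + e r t))
      - lnb * n r t * b r t - lnn * (n r t) ^ 2.
Hypothesis Hn_bcL : forall t, 0 < t < T ->
  (1 - gamma) * n L t
  + gamma * L * (n_r L t - chin / Dn * rho L t * n L t
                  * Hsw (1 - n L t / nm) * Phi ksg (e_r L t)) = 0.
Hypothesis Hn_bcR : forall t, 0 < t < T -> n_r (Rb t) t = 0.
Hypothesis Hn_init : forall r, Rb 0 <= r <= L -> n r 0 = 0.

Definition reaction (r t : R) : R :=
  knb * b r t * (e r t / (1 + e r t)) + kn * n r t * (e r t / (1 + e r t))
  - lnb * n r t * b r t - lnn * (n r t) ^ 2.

(* Above saturation the chemotactic flux vanishes near the point, and the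
   equation reads n_t = Dn (n_r / r + n_rr) - (div v) n - v n_r + reaction. *)
Lemma pde_above_saturation r t : OmegaI Rb L T r t -> nm < n r t ->
  n_t r t = Dn * n_r r t / r + Dn * n_rr r t - (v_r r t + v r t / r) * n r t
            - v r t * n_r r t + reaction r t.
Proof.
  intros HI Hsat. pose proof HI as [[Hr1 Hr2] Ht].
  pose proof (HRb_range t ltac:(lra)).
  destruct (Hn_eq r t HI) as [a1 [a2 [a3 [H1 [H2 [H3 Heq]]]]]].
  assert (X1 : derivable_pt_lim (fun y => y * v y t * n y t) r
     ((1 * v r t + r * v_r r t) * n r t + r * v r t * n_r r t)).
  { apply (D_mult (fun y => y * v y t) (fun y => n y t)); [|apply Hn_r; auto].
    apply (D_mult (fun y => y) (fun y => v y t));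
      [apply derivable_pt_lim_id|apply Hv_r; auto]. }
  assert (X2 : derivable_pt_lim (fun y => y * Dn * n_r y t) r
     ((1 * Dn + r * 0) * n_r r t + r * Dn * n_rr r t)).
  { apply (D_mult (fun y => y * Dn) (fun y => n_r y t)); [|apply Hn_rr; auto].
    apply (D_mult (fun y => y) (fun _ => Dn));
      [apply derivable_pt_lim_id|apply derivable_pt_lim_const]. }
  destruct (Hn_cont r t ltac:(split; lra) (n r t - nm) ltac:(lra)) as [d [Hd Hc]].
  assert (X3 : derivable_pt_lim (fun y => y * chin * rho y t * n y t
                 * Hsw (1 - n y t / nm) * Phi ksg (e_r y t)) r 0).
  { apply (dpl_zero_local _ r (Rmin d (Rmin (r - Rb t) (L - r)))); [rsolve|].
    intros y Hy.
    assert (Hny : Rabs (n y t - n r t) < n r t - nm).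
    { apply Hc; [split; [rsolve|lra] | rsolve |].
      replace (t - t) with 0 by ring. rewrite Rabs_R0; lra. }
    rewrite (Hsw_above_saturation (n y t) nm Hnm) by rsolve. ring. }
  rewrite (uniqueness_limite _ _ _ _ H1 X1), (uniqueness_limite _ _ _ _ H2 X2),
          (uniqueness_limite _ _ _ _ H3 X3) in Heq.
  assert (Hadv : / r * ((1 * v r t + r * v_r r t) * n r t + r * v r t * n_r r t)
            = (v_r r t + v r t / r) * n r t + v r t * n_r r t) by (field; lra).
  assert (Hdif : / r * ((1 * Dn + r * 0) * n_r r t + r * Dn * n_rr r t)
            = Dn * n_r r t / r + Dn * n_rr r t) by (field; lra).
  unfold reaction. lra.
Qed.

Lemma outflow_above_saturation t : 0 < t < T -> nm < n L t -> n_r L t <= 0.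
Proof.
  intros Ht Hsat. pose proof (HRb_range t ltac:(lra)).
  assert (Hbc : (1 - gamma) * n L t + gamma * L * n_r L t = 0).
  { rewrite <- (Hn_bcL t Ht), (Hsw_above_saturation (n L t) nm Hnm Hsat). ring. }
  destruct (Rle_or_lt (n_r L t) 0) as [|Hpos]; auto. exfalso.
  destruct (Req_dec gamma 0) as [Hg0|Hg0].
  - rewrite Hg0 in Hbc. lra.
  - assert (0 < gamma * L * n_r L t)
      by (apply Rmult_lt_0_compat; [apply Rmult_lt_0_compat|]; lra).
    assert (0 <= (1 - gamma) * n L t) by nra. lra.
Qed.

Definition barrier (eps c K r s : R) : R :=
  n r s - (eps * ((r - c) * (r - c)) + eps * K * s).

Lemma barrier_cont eps c K : cont2_on (barrier eps c K) (OmegaT Rb L T).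
Proof.
  apply (cont2_sub_sum n (fun r => eps * ((r - c) * (r - c))) (fun s => eps * K * s));
    auto; intros; reg.
Qed.

Lemma barrier_slice eps c K t : 0 < t < T ->
  relcont1 (fun y => barrier eps c K y t) (Rb t) L /\
  relcont1 (fun y => n_r y t - eps * (2 * (y - c))) (Rb t) L /\
  forall y, Rb t < y < L ->
    derivable_pt_lim (fun y => barrier eps c K y t) y (n_r y t - eps * (2 * (y - c))).
Proof.
  intros Ht. split; [|split].
  - apply (slice_relcont Rb L T); [apply barrier_cont|lra].
  - apply relcont_minus; [apply (slice_relcont Rb L T); auto; lra|].
    apply relcont_of_pt; intros; reg.
  - intros y Hy. eapply dpl_ext.
    + apply D_minus; [apply Hn_r; split; auto|].
      apply D_plus; [apply D_mult; [apply derivable_pt_lim_const|]|apply derivable_pt_lim_const].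
      apply D_mult; apply D_minus;
        first [apply derivable_pt_lim_id | apply derivable_pt_lim_const].
    + cbv beta; ring.
Qed.

Lemma contact_exceeds eps c K N ts rs : 0 < eps -> 0 < K ->
  first_contact Rb L (barrier eps c K) N ts rs -> N < n rs ts.
Proof.
  intros He HK [Hts [_ [Hz _]]]. unfold barrier in Hz.
  pose proof (Rle_0_sqr (rs - c)). unfold Rsqr in *.
  assert (0 < eps * K * ts) by (apply Rmult_lt_0_compat; [apply Rmult_lt_0_compat|]; lra).
  nra.
Qed.

(* No first contact on the free boundary: there n_r = 0, so the barrier
   increases into the domain since its centre c lies beyond Rb. *)
Lemma no_contact_free_boundary eps c K N ts rs : 0 < eps -> ts < T -> Rb ts < c ->
  first_contact Rb L (barrier eps c K) N ts rs -> rs <> Rb ts.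
Proof.
  intros He HtsT Hc [Hts [Hrs [Hz [Hmax _]]]] ->.
  pose proof (HRb_range ts ltac:(lra)).
  destruct (barrier_slice eps c K ts ltac:(lra)) as [Hf [Hg Hd]].
  destruct (incr_left _ _ (Rb ts) L ltac:(lra) Hf Hg Hd) as [x [Hx Hfx]].
  { rewrite Hn_bcR by lra. nra. }
  pose proof (Hmax x ltac:(lra)). lra.
Qed.

(* No first contact at r = L above saturation: there n_r <= 0, so the barrier
   increases inwards since c < L. *)
Lemma no_contact_outer_boundary eps c K N ts rs : 0 < eps -> 0 < K -> ts < T ->
  nm <= N -> c < L -> first_contact Rb L (barrier eps c K) N ts rs -> rs <> L.
Proof.
  intros He HK HtsT HN Hc Hcon ->.
  pose proof (contact_exceeds eps c K N ts L He HK Hcon) as Hex.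
  destruct Hcon as [Hts [Hrs [Hz [Hmax _]]]].
  pose proof (HRb_range ts ltac:(lra)).
  pose proof (outflow_above_saturation ts ltac:(lra) ltac:(lra)).
  destruct (barrier_slice eps c K ts ltac:(lra)) as [Hf [Hg Hd]].
  destruct (incr_right _ _ (Rb ts) L ltac:(lra) Hf Hg Hd) as [x [Hx Hfx]]; [nra|].
  pose proof (Hmax x ltac:(lra)). lra.
Qed.

Lemma contact_space_derivatives eps c K N ts rs : ts < T -> Rb ts < rs < L ->
  first_contact Rb L (barrier eps c K) N ts rs ->
  n_r rs ts = eps * (2 * (rs - c)) /\ n_rr rs ts <= 2 * eps.
Proof.
  intros HtsT Hrs [Hts [_ [Hz [Hmax _]]]].
  destruct (barrier_slice eps c K ts ltac:(lra)) as [_ [_ Hd]].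
  set (d := Rmin (rs - Rb ts) (L - rs)).
  assert (Hd0 : 0 < d) by (unfold d; rsolve).
  assert (Hnear : forall y, Rabs (y - rs) < d -> Rb ts < y < L)
    by (intros y Hy; unfold d in Hy; rsolve).
  assert (Hloc : forall y, Rabs (y - rs) < d -> barrier eps c K y ts <= barrier eps c K rs ts)
    by (intros y Hy; rewrite Hz; pose proof (Hnear y Hy); apply Hmax; lra).
  assert (Hg0 : n_r rs ts - eps * (2 * (rs - c)) = 0)
    by exact (max_deriv0 _ rs _ d (Hd rs Hrs) Hd0 Hloc).
  split; [lra|].
  assert (Hg' : derivable_pt_lim (fun y => n_r y ts - eps * (2 * (y - c))) rs
                  (n_rr rs ts - eps * 2)).
  { eapply dpl_ext.
    - apply D_minus; [apply Hn_rr; split; auto; lra|].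
      apply D_mult; [apply derivable_pt_lim_const|].
      apply D_mult; [apply derivable_pt_lim_const|].
      apply D_minus; [apply derivable_pt_lim_id|apply derivable_pt_lim_const].
    - cbv beta; ring. }
  assert (n_rr rs ts - eps * 2 <= 0); [|lra].
  apply (max_deriv2 (fun y => barrier eps c K y ts) _ rs _ d Hd0 Hg0 Hg').
  intros y Hy. split; [apply Hd, Hnear|apply Hloc]; auto.
Qed.

(* At an interior first contact the barrier has just risen to N: n_t >= eps K. *)
Lemma contact_time_derivative eps c K N ts rs : ts < T -> Rb ts < rs < L ->
  first_contact Rb L (barrier eps c K) N ts rs -> eps * K <= n_t rs ts.
Proof.
  intros HtsT Hrs [Hts [_ [Hz [_ Hbefore]]]].
  assert (Hphi : derivable_pt_lim (fun s => barrier eps c K rs s) ts (n_t rs ts - eps * K)).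
  { eapply dpl_ext.
    - apply D_minus; [apply Hn_t; split; auto; lra|].
      apply D_plus; [apply derivable_pt_lim_const|].
      apply D_mult; [apply derivable_pt_lim_const|apply derivable_pt_lim_id].
    - cbv beta; ring. }
  destruct (HRb_cont ts ltac:(lra) (rs - Rb ts) ltac:(lra)) as [d [Hd HR]].
  assert (0 <= n_t rs ts - eps * K); [|lra].
  apply (sign_left _ ts _ (Rmin d ts) Hphi ltac:(rsolve)).
  intros h Hh. rewrite Hz. apply Rlt_le.
  assert (Rabs (Rb (ts - h) - Rb ts) < rs - Rb ts) by (apply HR; rsolve).
  apply Hbefore; rsolve.
Qed.

(* No interior first contact: at such a point the spatial maximum, the time
   monotonicity and the equation above saturation combine into
   eps K <= n_t <= eps (Dn (2 + 2 L/m) + 2 V L) < eps K, since the reaction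
   and dilution terms are nonpositive above N. *)
Lemma no_interior_contact eps c K N m V ts rs : 0 < eps -> ts < T -> Rb ts < rs < L ->
  0 < m <= Rb ts -> 0 < c <= L -> Rabs (v rs ts) <= V ->
  knb <= lnb * N -> kn + beta * (rho_m - 1) <= lnn * N -> nm <= N ->
  Dn * (2 + 2 * L / m) + 2 * V * L < K ->
  ~ first_contact Rb L (barrier eps c K) N ts rs.
Proof.
  intros He HtsT Hrs Hm Hc HV HN1 HN2 HN3 HK Hcon.
  assert (HLm : 0 < L / m) by (apply Rdiv_lt_0_compat; lra).
  pose proof (Rabs_pos (v rs ts)).
  assert (HK0 : 0 < K) by nra.
  pose proof (contact_exceeds eps c K N ts rs He HK0 Hcon) as Hex.
  destruct (contact_space_derivatives eps c K N ts rs HtsT Hrs Hcon) as [Hnr Hnrr].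
  pose proof (contact_time_derivative eps c K N ts rs HtsT Hrs Hcon) as Hnt.
  destruct Hcon as [Hts _].
  assert (HOI : OmegaI Rb L T rs ts) by (split; split; lra).
  assert (HOT : OmegaT Rb L T rs ts) by (split; lra).
  rewrite (pde_above_saturation rs ts HOI ltac:(lra)) in Hnt.
  pose proof (divergence_lower_bound rs ts HOI) as Hdiv.
  pose proof (Hb_nonneg rs ts HOT).
  pose proof (reaction_dominated knb kn lnb lnn (beta * (rho_m - 1)) N (n rs ts) (b rs ts)
    (e rs ts / (1 + e rs ts)) ltac:(lra) ltac:(lra) ltac:(lra) ltac:(lra) HN1 HN2
    ltac:(lra) ltac:(auto) (activation_bounds _ (He_nonneg rs ts HOT))) as Hreact.
  pose proof (gradient_terms_bound eps Dn c m rs L (v rs ts) V He HDn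
    ltac:(lra) ltac:(lra) Hc HV) as Hgrad.
  rewrite <- Hnr in Hgrad.
  assert (Hcurv : Dn * n_rr rs ts <= eps * (Dn * 2)) by nra.
  assert (Hdil : - ((v_r rs ts + v rs ts / rs) * n rs ts) <= beta * (rho_m - 1) * n rs ts)
    by nra.
  assert (eps * (Dn * (2 + 2 * L / m) + 2 * V * L) < eps * K)
    by (apply Rmult_lt_compat_l; lra).
  unfold reaction in Hnt. lra.
Qed.

(* Barrier estimate up to a time t0 < T: with c between the free boundary and
   L, and K large, every eps-perturbed barrier stays below N, since its first
   contact with N can occur neither on the boundary nor inside. *)
Lemma barrier_estimate N t0 : 0 <= t0 < T ->
  knb <= lnb * N -> kn + beta * (rho_m - 1) <= lnn * N -> nm <= N ->
  exists c K, 0 <= K /\ forall eps r, 0 < eps -> Rb t0 <= r <= L ->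
    n r t0 <= N + eps * ((r - c) * (r - c) + K * t0).
Proof.
  intros Ht0 HN1 HN2 HN3.
  destruct (boundary_bounds Rb L T HRb_cont HRb_range t0 Ht0) as [m [Mx [Hm [HMx HRbb]]]].
  destruct (bounded_up_to Rb L T HRb_cont HRb_range v t0 Hv_cont Ht0) as [V HV].
  set (c := (Mx + L) / 2).
  set (K := Dn * (2 + 2 * L / m) + 2 * Rabs V * L + 1).
  assert (HLm : 0 < L / m) by (apply Rdiv_lt_0_compat; pose proof (HRbb 0); lra).
  pose proof (Rabs_pos V). pose proof (HRbb 0 ltac:(lra)).
  exists c, K. split; [unfold K; nra|]. intros eps r He Hr.
  assert (Hinit : forall y, Rb 0 <= y <= L -> barrier eps c K y 0 < N).
  { intros y Hy. unfold barrier. rewrite Hn_init by auto.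
    pose proof (Rle_0_sqr (y - c)). unfold Rsqr in *. nra. }
  destruct (below_or_first_contact Rb L T HRb_cont HRb_range (barrier eps c K) N t0
              (barrier_cont eps c K) Ht0 Hinit) as [Hbelow|[ts [rs [Hts Hcon]]]].
  - pose proof (Hbelow r Hr). unfold barrier in *. lra.
  - exfalso. pose proof Hcon as [Hts0 [Hrs _]].
    pose proof (HRbb ts ltac:(lra)).
    destruct (Rle_lt_or_eq _ _ (proj1 Hrs)) as [Hleft|Hleft];
      [|exact (no_contact_free_boundary eps c K N ts rs He ltac:(lra)
                 ltac:(unfold c; lra) Hcon (eq_sym Hleft))].
    destruct (Rle_lt_or_eq _ _ (proj2 Hrs)) as [Hright|Hright];
      [|exact (no_contact_outer_boundary eps c K N ts rs He ltac:(unfold K; nra)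
                 ltac:(lra) HN3 ltac:(unfold c; lra) Hcon Hright)].
    refine (no_interior_contact eps c K N m (Rabs V) ts rs He _ _ _ _ _ HN1 HN2 HN3 _ Hcon);
      try (unfold c, K; lra).
    apply Rle_trans with V; [apply HV; [split|]; lra|apply Rle_abs].
Qed.

Lemma cell_density_bound r t : OmegaT Rb L T r t ->
  n r t <= Rmax (knb / lnb) (Rmax ((kn + beta * (rho_m - 1)) / lnn) nm).
Proof.
  intros [Hr Ht].
  set (N := Rmax (knb / lnb) (Rmax ((kn + beta * (rho_m - 1)) / lnn) nm)).
  assert (HN1 : knb / lnb <= N) by apply Rmax_l.
  assert (HN2 : (kn + beta * (rho_m - 1)) / lnn <= N)
    by (eapply Rle_trans; [apply Rmax_l|apply Rmax_r]).
  assert (HN3 : nm <= N) by (eapply Rle_trans; [apply Rmax_r|apply Rmax_r]).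
  destruct (barrier_estimate N t Ht) as [c [K [HK Hbar]]].
  - assert (knb / lnb * lnb = knb) by (field; lra). nra.
  - assert ((kn + beta * (rho_m - 1)) / lnn * lnn = kn + beta * (rho_m - 1))
      by (field; lra). nra.
  - exact HN3.
  - apply (le_of_le_plus_eps _ _ ((r - c) * (r - c) + K * t));
      [pose proof (Rle_0_sqr (r - c)); pose proof (Rmult_le_pos K t HK ltac:(lra));
       unfold Rsqr in *; lra|].
    intros eps He. apply Hbar; auto.
Qed.

End CellDensity.

Theorem lemma4p5
  (* standing constants *)
  (L R0 beta T : R)
  (HL : 0 < L) (HR0 : 0 < R0 < L) (Hbeta : 0 < beta) (HT : 0 < T)
  (* free boundary R in C^1([0,T)) *)
  (Rb Rb' : R -> R)
  (HRb0 : Rb 0 = R0)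
  (HRb_range : forall t, 0 <= t < T -> 0 < Rb t < L)
  (HRb_der : forall t, 0 < t < T -> derivable_pt_lim Rb t (Rb' t))
  (HRb_cont : cont1_on Rb (fun t => 0 <= t < T))
  (HRb'_cont : cont1_on Rb' (fun t => 0 <= t < T))
  (* matrix density rho, classical on Omega_T *)
  (rho rho_r rho_t : R -> R -> R)
  (Hrho_cont : cont2_on rho (OmegaT Rb L T))
  (Hrho_r_cont : cont2_on rho_r (OmegaT Rb L T))
  (Hrho_t_cont : cont2_on rho_t (OmegaT Rb L T))
  (Hrho_r : forall r t, OmegaI Rb L T r t ->
     derivable_pt_lim (fun y => rho y t) r (rho_r r t))
  (Hrho_t : forall r t, OmegaI Rb L T r t ->
     derivable_pt_lim (fun s => rho r s) t (rho_t r t))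
  (* velocity v, twice continuously differentiable in r *)
  (v v_r v_rr P_r : R -> R -> R)
  (Hv_cont : cont2_on v (OmegaT Rb L T))
  (Hv_r_cont : cont2_on v_r (OmegaT Rb L T))
  (Hv_rr_cont : cont2_on v_rr (OmegaI Rb L T))
  (Hv_r : forall r t, OmegaI Rb L T r t ->
     derivable_pt_lim (fun y => v y t) r (v_r r t))
  (Hv_rr : forall r t, OmegaI Rb L T r t ->
     derivable_pt_lim (fun y => v_r y t) r (v_rr r t))
  (HP_r : forall r t, OmegaI Rb L T r t ->
     derivable_pt_lim (fun y => Pres beta (rho y t)) r (P_r r t))
  (Hv_eq : forall r t, OmegaI Rb L T r t ->
     / r * (v_r r t + r * v_rr r t) - v r t / r ^ 2 = P_r r t)
  (Hv_L : forall t, 0 <= t < T -> v L t = 0)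
  (Hv_R : forall t, 0 <= t < T -> v_r (Rb t) t = Pres beta (rho (Rb t) t))
  (Hlaw : forall t, 0 <= t < T -> Rb' t = v (Rb t) t)
  (* hypotheses of the lemma *)
  (rho_m : R) (Hrho_m : 1 < rho_m)
  (Hrho_bd : forall r t, OmegaT Rb L T r t -> 0 <= rho r t < rho_m)
  (b e e_r e_rr : R -> R -> R)
  (Hb_cont : cont2_on b (OmegaT Rb L T))
  (He_cont : cont2_on e (OmegaT Rb L T))
  (He_r_cont : cont2_on e_r (OmegaT Rb L T))
  (He_rr_cont : cont2_on e_rr (OmegaI Rb L T))
  (Hb_nonneg : forall r t, OmegaT Rb L T r t -> 0 <= b r t)
  (He_nonneg : forall r t, OmegaT Rb L T r t -> 0 <= e r t)
  (He_r : forall r t, OmegaI Rb L T r t ->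
     derivable_pt_lim (fun y => e y t) r (e_r r t))
  (He_rr : forall r t, OmegaI Rb L T r t ->
     derivable_pt_lim (fun y => e_r y t) r (e_rr r t))
  (gamma Dn chin nm knb kn lnb lnn ksg : R)
  (Hgamma : 0 <= gamma <= 1)
  (HDn : 0 < Dn) (Hchin : 0 < chin) (Hnm : 0 < nm) (Hknb : 0 < knb)
  (Hkn : 0 < kn) (Hlnb : 0 < lnb) (Hlnn : 0 < lnn) (Hksg : 0 < ksg)
  (* the cell density n: classical solution *)
  (n n_r n_rr n_t : R -> R -> R)
  (Hn_cont : cont2_on n (OmegaT Rb L T))
  (Hn_r_cont : cont2_on n_r (OmegaT Rb L T))
  (Hn_rr_cont : cont2_on n_rr (OmegaI Rb L T))
  (Hn_t_cont : cont2_on n_t (OmegaI Rb L T))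
  (Hn_r : forall r t, OmegaI Rb L T r t ->
     derivable_pt_lim (fun y => n y t) r (n_r r t))
  (Hn_rr : forall r t, OmegaI Rb L T r t ->
     derivable_pt_lim (fun y => n_r y t) r (n_rr r t))
  (Hn_t : forall r t, OmegaI Rb L T r t ->
     derivable_pt_lim (fun s => n r s) t (n_t r t))
  (Hn_nonneg : forall r t, OmegaT Rb L T r t -> 0 <= n r t)
  (Hn_eq : forall r t, OmegaI Rb L T r t ->
     exists a1 a2 a3,
       derivable_pt_lim (fun y => y * v y t * n y t) r a1 /\
       derivable_pt_lim (fun y => y * Dn * n_r y t) r a2 /\
       derivable_pt_lim (fun y => y * chin * rho y t * n y t
                                   * Hsw (1 - n y t / nm) * Phi ksg (e_r y t)) r a3 /\
       n_t r t + / r * a1 =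
         / r * a2 - / r * a3
         + knb * b r t * (e r t / (1 + e r t))
         + kn * n r t * (e r t / (1 + e r t))
         - lnb * n r t * b r t - lnn * (n r t) ^ 2)
  (Hn_bcL : forall t, 0 < t < T ->
     (1 - gamma) * n L t
     + gamma * L * (n_r L t - chin / Dn * rho L t * n L t
                     * Hsw (1 - n L t / nm) * Phi ksg (e_r L t)) = 0)
  (Hn_bcR : forall t, 0 < t < T -> n_r (Rb t) t = 0)
  (Hn_init : forall r, R0 <= r <= L -> n r 0 = 0) :
  forall r t, OmegaT Rb L T r t ->
    0 <= n r t <=
      Rmax (knb / lnb) (Rmax ((kn + beta * (rho_m - 1)) / lnn) nm).
Proof.
  intros r t Hrt. split; [exact (Hn_nonneg r t Hrt)|].
  assert (Hinit : forall y, Rb 0 <= y <= L -> n y 0 = 0)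
    by (intros y Hy; apply Hn_init; rewrite <- HRb0; exact Hy).
  exact (cell_density_bound L T beta rho_m Rb rho v v_r v_rr P_r
    HRb_cont HRb_range Hbeta Hrho_m Hrho_bd Hrho_cont Hv_cont Hv_r_cont
    Hv_r Hv_rr HP_r Hv_eq Hv_L Hv_R b e e_r gamma Dn chin nm knb kn lnb lnn ksg
    n n_r n_rr n_t Hb_nonneg He_nonneg Hgamma HDn Hnm Hknb Hkn Hlnb Hlnn
    Hn_cont Hn_r_cont Hn_r Hn_rr Hn_t Hn_eq Hn_bcL Hn_bcR Hinit r t Hrt).
Qed.
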